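(* For every positive integer $k$, the binary word $w_k=a^kba^kba^{2k}$ (of length $4k+2$) contains exactly $k+\left(\lfloor k/2\rfloor+1\right)^2+(k+1)\lceil k/2\rceil$ distinct abelian squares as factors. Consequently, the maximum number of distinct abelian square factors of a binary word of length $4k+2$ is at least $k+\left(\lfloor k/2\rfloor+1\right)^2+(k+1)\lceil k/2\rceil$.
   Context: For a word $u$ over $\{a,b\}$ and a letter $c$, $|u|_c$ is the number of occurrences of $c$ in $u$, and the Parikh vector of $u$ is $\mathcal{P}(u)=[|u|_a,|u|_b]$. A nonempty word $uv$ is an abelian square if $\mathcal{P}(u)=\mathcal{P}(v)$ (so $|u|=|v|\ge 1$). The number of distinct abelian squares in $w$ is the number of distinct words (as strings) that occur as factors (contiguous subwords) of $w$ and are abelian squares. $a^m$ denotes $m$ consecutive copies of the letter $a$. *)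

From mathcomp Require Import all_boot.
Set Implicit Arguments. Unset Strict Implicit. Unset Printing Implicit Defensive.

Definition la : bool := false.
Definition lb : bool := true.

Definition occ (c : bool) (u : seq bool) : nat := count (pred1 c) u.

Definition parikh (u : seq bool) : nat * nat := (occ la u, occ lb u).

Definition abelian_square (x : seq bool) : bool :=
  has (fun i => (0 < i) && (parikh (take i x) == parikh (drop i x)))
      (iota 0 (size x).+1).

Definition factors (w : seq bool) : seq (seq bool) :=
  undup [seq take j (drop i w) | i <- iota 0 (size w).+1, j <- iota 0 (size w).+1].

Definition num_abelian_squares (w : seq bool) : nat :=
  size [seq x <- factors w | abelian_square x].

Definition wk (k : nat) : seq bool :=
  nseq k la ++ [:: lb] ++ nseq k la ++ [:: lb] ++ nseq (2 * k) la.

From mathcomp Require Import all_boot zify.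

(* An abelian square over {a,b} is a factor of even length 2h whose two halves
   contain the same number of b's.  In w_k the number of b's in any factor is
   read off from the prefix counts, so a factor at position s of half-length h
   is an abelian square iff the b-prefix count takes equal steps on
   [s, s+h] and [s+h, s+2h].  This happens either when the factor contains no
   b, giving the k words a^{2m} (m <= k), or when the first half contains the
   first b and the second half the second one.  The factors of the second kind
   are determined by the position of the first b and by their length, and
   there are sum_{i=0..k} (floor((i+k)/2) + 1) of them, which evaluates to
   (floor(k/2)+1)^2 + (k+1) ceil(k/2). *)

Lemma count_take_nseq_cat (T : Type) (a : pred T) (x : T) m n r :
  ~~ a x -> count a (take n (nseq m x ++ r)) = count a (take (n - m) r).
Proof.
move=> /negbTE ax; rewrite take_cat size_nseq.
case: ltnP => [lt_nm | le_mn]; last by rewrite count_cat count_nseq ax.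
have -> : n - m = 0 by lia.
by rewrite take0 (take_nseq _ (ltnW lt_nm)) count_nseq ax.
Qed.

Lemma take_size_take (T : Type) l (s : seq T) : take (size (take l s)) s = take l s.
Proof.
rewrite size_take; case: ltnP => // le_sl.
by rewrite take_size take_oversize.
Qed.

Lemma count_id_eq0 (x : seq bool) : count id x = 0 -> x = nseq (size x) false.
Proof.
move=> x0; apply/all_pred1P/allP => -[] // bx.
suff : 0 < count id x by rewrite x0.
by rewrite -has_count; apply/hasP; exists true.
Qed.

Lemma occ_lb x : occ lb x = count id x.
Proof. by apply: eq_count => -[]. Qed.

Lemma occ_la x : occ la x = size x - count id x.
Proof. by rewrite -(count_predC id x) addKn; apply: eq_count => -[]. Qed.

Lemma abelian_squareP x : abelian_square x <->
  exists h, [/\ 0 < h, size x = 2 * h & count id (take h x) = count id (drop h x)].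
Proof.
have size_halves h : h <= size x -> size (take h x) = h /\ size (drop h x) = size x - h.
  by move=> le_hx; rewrite size_take size_drop; case: ltnP; lia.
split.
  case/hasP=> h; rewrite mem_iota => /andP[_ lt_hx] /andP[h_gt0 /eqP].
  rewrite /parikh !occ_la !occ_lb => -[eq_a eq_b]; exists h; split => //.
  have [size_t size_d] := size_halves h lt_hx.
  move: eq_a (count_size id (take h x)) (count_size id (drop h x)).
  by rewrite eq_b size_t size_d; lia.
move=> [h [h_gt0 size_x eq_b]]; apply/hasP; exists h; first by rewrite mem_iota; lia.
have [size_t size_d] : size (take h x) = h /\ size (drop h x) = size x - h.
  by apply: size_halves; lia.
rewrite h_gt0 /parikh !occ_la !occ_lb size_t size_d eq_b size_x /=.
by have -> : 2 * h - h = h by lia.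
Qed.

Lemma factorsP w x : x \in factors w <->
  exists s l, [/\ s <= size w, l <= size w & x = take l (drop s w)].
Proof.
rewrite /factors mem_undup; split.
  case/allpairsP => -[s l] [s_in l_in ->]; rewrite !mem_iota in s_in l_in.
  by exists s, l; split => //; lia.
move=> [s [l [s_le l_le ->]]]; apply/allpairsP; exists (s, l).
by rewrite !mem_iota /= !ltnS s_le l_le.
Qed.

Definition wk_bprefix (k n : nat) : nat :=
  (if k < n then 1 else 0) + (if 2 * k + 1 < n then 1 else 0).

Lemma size_wk k : size (wk k) = 4 * k + 2.
Proof. by rewrite /wk !size_cat /= !size_nseq; lia. Qed.

Lemma count_take_wk k n : count id (take n (wk k)) = wk_bprefix k n.
Proof.
have count_take_cons m r :
  count id (take m (true :: r)) = (0 < m) + count id (take m.-1 r).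
  by case: m => [|m]; rewrite ?take0.
rewrite /wk /lb /la /= -[nseq (2 * k) _]cats0.
rewrite !(count_take_nseq_cat, count_take_cons) //= /wk_bprefix.
by repeat case: ifP; lia.
Qed.

Lemma count_factor_wk k s h :
  count id (take h (drop s (wk k))) = wk_bprefix k (s + h) - wk_bprefix k s.
Proof. by rewrite -!count_take_wk takeD count_cat addKn. Qed.

Lemma size_factor_wk k s l : s + l <= 4 * k + 2 -> size (take l (drop s (wk k))) = l.
Proof. by move=> fits; rewrite size_take size_drop size_wk; case: ltnP; lia. Qed.

Lemma count_halves_factor_wk k s h (x := take (2 * h) (drop s (wk k))) :
  count id (take h x) = wk_bprefix k (s + h) - wk_bprefix k s /\
  count id (drop h x) = wk_bprefix k (s + 2 * h) - wk_bprefix k (s + h).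
Proof.
rewrite {}/x take_takel ?count_factor_wk; last lia.
have -> : drop h (take (2 * h) (drop s (wk k))) = take h (drop h (drop s (wk k))).
  by rewrite [RHS]take_drop addnn -mul2n.
rewrite drop_drop count_factor_wk.
by split => //; congr (_ - _); congr wk_bprefix; lia.
Qed.

Lemma abelian_square_factor_wk k s h : s + 2 * h <= 4 * k + 2 ->
  abelian_square (take (2 * h) (drop s (wk k))) =
  (0 < h) && (wk_bprefix k (s + h) - wk_bprefix k s
              == wk_bprefix k (s + 2 * h) - wk_bprefix k (s + h)).
Proof.
move=> fits; have [count_l count_r] := count_halves_factor_wk k s h.
apply/idP/andP => [/abelian_squareP [h' [h'_gt0 size_x]]|[h_gt0 /eqP balanced]].
  rewrite size_factor_wk // in size_x; have eq_h : h' = h by lia.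
  by subst h'; rewrite count_l count_r => ->.
by apply/(abelian_squareP (take _ _)); exists h; rewrite size_factor_wk // count_l count_r.
Qed.

Lemma wk_bprefix_before_b k n : n <= k -> wk_bprefix k n = 0.
Proof. by rewrite /wk_bprefix => le_nk; do 2 case: ifP; lia. Qed.

Lemma wk_bprefix_between_b k n : k < n <= 2 * k + 1 -> wk_bprefix k n = 1.
Proof. by rewrite /wk_bprefix => /andP[? ?]; do 2 case: ifP; lia. Qed.

Lemma wk_bprefix_after_b k n : 2 * k + 1 < n -> wk_bprefix k n = 2.
Proof. by rewrite /wk_bprefix => ?; do 2 case: ifP; lia. Qed.

Lemma wk_bprefix_balanced k s h : 0 < h -> s + 2 * h <= 4 * k + 2 ->
  wk_bprefix k (s + h) - wk_bprefix k s = wk_bprefix k (s + 2 * h) - wk_bprefix k (s + h) ->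
  (wk_bprefix k (s + 2 * h) = wk_bprefix k s /\ h <= k) \/
  s <= k /\ k < s + h /\ s + h <= 2 * k + 1 /\ 2 * k + 2 <= s + 2 * h.
Proof. by rewrite /wk_bprefix => h_gt0 fits; repeat case: ifP; lia. Qed.

Definition a_squares (k : nat) : seq (seq bool) := [seq nseq (2 * m) la | m <- iota 1 k].

(* The factor of w_k starting [i] letters before the first [b]; [t] indexes its
   admissible lengths. *)
Definition bb_square (k i t : nat) : seq bool :=
  take (2 * (i + k + 1 - t)) (drop (k - i) (wk k)).

Definition bb_squares (k : nat) : seq (seq bool) :=
  [seq bb_square k i t | i <- iota 0 k.+1, t <- iota 0 ((i + k)./2).+1].

Definition abelian_squares_wk (k : nat) : seq (seq bool) := a_squares k ++ bb_squares k.

Lemma drop_wk_tail k : drop (2 * k + 2) (wk k) = nseq (2 * k) la.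
Proof.
have -> : wk k = (nseq k la ++ lb :: nseq k la ++ [:: lb]) ++ nseq (2 * k) la.
  by rewrite /wk -!catA /= -!catA.
by rewrite drop_size_cat // size_cat /= size_cat !size_nseq /=; lia.
Qed.

Lemma factors_wk_take k s l : s + l <= 4 * k + 2 -> take l (drop s (wk k)) \in factors (wk k).
Proof. by move=> fits; apply/factorsP; exists s, l; rewrite size_wk; split => //; lia. Qed.

Lemma abelian_squares_wk_factor k x :
  x \in abelian_squares_wk k -> (x \in factors (wk k)) && abelian_square x.
Proof.
rewrite mem_cat => /orP[/mapP [m m_in ->] | /allpairsPdep [i [t [i_in t_in ->]]]].
  rewrite mem_iota in m_in.
  have -> : nseq (2 * m) la = take (2 * m) (drop (2 * k + 2) (wk k)).
    by rewrite drop_wk_tail take_nseq //; lia.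
  rewrite factors_wk_take ?abelian_square_factor_wk /wk_bprefix; try lia.
  by apply/andP; split; [lia | repeat case: ifP; lia].
rewrite !mem_iota in i_in t_in.
rewrite /bb_square factors_wk_take ?abelian_square_factor_wk /wk_bprefix; try lia.
by apply/andP; split; [lia | repeat case: ifP; lia].
Qed.

Lemma factor_abelian_squares_wk k x :
  x \in factors (wk k) -> abelian_square x -> x \in abelian_squares_wk k.
Proof.
move=> /factorsP [s [l [_ _ ->]]] abelian_x.
have [h [h_gt0 size_x _]] := proj1 (abelian_squareP _) abelian_x.
have fits : s + 2 * h <= 4 * k + 2.
  by move: size_x; rewrite size_take size_drop size_wk; case: ltnP; lia.
have x_eq : take l (drop s (wk k)) = take (2 * h) (drop s (wk k)).
  by rewrite -size_x take_size_take.
move: abelian_x; rewrite x_eq abelian_square_factor_wk // h_gt0 => /eqP.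
case/(wk_bprefix_balanced _ _ _ h_gt0 fits) => [[no_b h_le] | [s_le [first_b [h_le second_b]]]].
  have /count_id_eq0 -> : count id (take (2 * h) (drop s (wk k))) = 0.
    by rewrite count_factor_wk no_b subnn.
  rewrite mem_cat size_factor_wk //; apply/orP; left.
  by apply/mapP; exists h; rewrite ?mem_iota //; lia.
rewrite mem_cat; apply/orP; right; apply/allpairsPdep.
exists (k - s), (2 * k + 1 - s - h); rewrite !mem_iota /bb_square.
by split; [lia | lia | congr (take _ (drop _ _)); lia].
Qed.

Lemma count_take_bb_square k i t j : i <= k -> 2 * t <= i + k -> j <= k + 2 ->
  count id (take j (bb_square k i t)) = wk_bprefix k (k - i + j) - wk_bprefix k (k - i).
Proof. by move=> *; rewrite /bb_square take_takel ?count_factor_wk //; lia. Qed.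

(* [bb_square k i t] has its first [b] at index [i], and its length determines [t]. *)
Lemma bb_square_inj k i1 t1 i2 t2 :
  i1 <= k -> 2 * t1 <= i1 + k -> i2 <= k -> 2 * t2 <= i2 + k ->
  bb_square k i1 t1 = bb_square k i2 t2 -> i1 = i2 /\ t1 = t2.
Proof.
move=> i1_le t1_le i2_le t2_le eq12.
have size12 := congr1 size eq12; rewrite !size_factor_wk in size12; try lia.
have first_b j : j <= k + 2 ->
    wk_bprefix k (k - i1 + j) - wk_bprefix k (k - i1) =
    wk_bprefix k (k - i2 + j) - wk_bprefix k (k - i2).
  by move=> j_le; rewrite -(count_take_bb_square k i1 t1) -?(count_take_bb_square k i2 t2) ?eq12.
clear eq12; wlog lt12 : i1 t1 i2 t2 i1_le t1_le i2_le t2_le size12 first_b / i1 < i2.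
  move=> hyp; case: (ltngtP i1 i2) => [lt12 | lt21 | eq_i]; first exact: hyp.
    have [-> ->] // := hyp i2 t2 i1 t1 i2_le t2_le i1_le t1_le (esym size12)
      (fun j le_j => esym (first_b j le_j)) lt21.
  by split => //; lia.
have /first_b : i1.+1 <= k + 2 by lia.
rewrite (wk_bprefix_before_b k (k - i1)) ?(wk_bprefix_between_b k (k - i1 + i1.+1)); try lia.
by rewrite !(wk_bprefix_before_b k (k - i2 + _)) ?(wk_bprefix_before_b k (k - i2)); lia.
Qed.

Lemma uniq_abelian_squares_wk k : uniq (abelian_squares_wk k).
Proof.
rewrite cat_uniq; apply/and3P; split.
- rewrite map_inj_uniq ?iota_uniq // => m1 m2 /(congr1 size).
  by rewrite !size_nseq; lia.
- apply/hasPn => _ /allpairsPdep [i [t [i_in t_in ->]]]; rewrite !mem_iota in i_in t_in.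
  apply/negP => /mapP [m _] /(congr1 (count id)).
  rewrite count_nseq mul0n /bb_square count_factor_wk.
  by rewrite (wk_bprefix_before_b k (k - i)) ?wk_bprefix_after_b; lia.
apply: allpairs_uniq_dep => [|i _|]; rewrite ?iota_uniq //.
move=> _ _ /allpairsPdep [i1 [t1 [i1_in t1_in ->]]] /allpairsPdep [i2 [t2 [i2_in t2_in ->]]].
rewrite !mem_iota in i1_in t1_in i2_in t2_in => /= /bb_square_inj [||||-> ->] //; lia.
Qed.

Lemma sumn_half_succ n : sumn [seq (t./2).+1 | t <- iota 0 n] = (n./2).+1 * uphalf n.
Proof.
elim: n => // n IHn.
rewrite -addn1 iotaD map_cat sumn_cat IHn /= addn0 addn1 add0n.
have -> : n.+1./2 = uphalf n by [].
have -> : uphalf n.+1 = n./2.+1 by [].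
by rewrite [RHS]mulnC mulnSr.
Qed.

Lemma sumn_bb_squares k :
  sumn [seq ((i + k)./2).+1 | i <- iota 0 k.+1] = (k./2 + 1) ^ 2 + (k + 1) * uphalf k.
Proof.
have -> : sumn [seq ((i + k)./2).+1 | i <- iota 0 k.+1] =
    sumn [seq (t./2).+1 | t <- iota 0 (k + k.+1)] - sumn [seq (t./2).+1 | t <- iota 0 k].
  rewrite iotaD map_cat sumn_cat addKn.
  have -> : iota k k.+1 = map (addn k) (iota 0 k.+1) by rewrite -iotaDl addn0.
  rewrite -map_comp.
  by congr sumn; apply: eq_map => i /=; rewrite addnC.
rewrite !sumn_half_succ.
have -> : (k + k.+1)./2 = k by lia.
have -> : uphalf (k + k.+1) = k.+1 by lia.
have k_halves : k = k./2 + uphalf k by lia.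
by move: (k./2) (uphalf k) k_halves => a b ->; nia.
Qed.

Lemma size_abelian_squares_wk k :
  size (abelian_squares_wk k) = k + (k./2 + 1) ^ 2 + (k + 1) * uphalf k.
Proof.
rewrite size_cat size_map size_iota size_allpairs_dep -addnA -sumn_bb_squares.
by congr (_ + sumn _); apply: eq_map => i; rewrite size_iota.
Qed.

Lemma num_abelian_squares_wk k :
  num_abelian_squares (wk k) = k + (k./2 + 1) ^ 2 + (k + 1) * uphalf k.
Proof.
rewrite -size_abelian_squares_wk; apply/perm_size/uniq_perm.
- by rewrite filter_uniq ?undup_uniq.
- exact: uniq_abelian_squares_wk.
move=> x; rewrite mem_filter; apply/andP/idP => [[abelian_x factor_x] | ].
  exact: factor_abelian_squares_wk.
by case/abelian_squares_wk_factor/andP.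
Qed.

Theorem mainTheorem3 (k : nat) (hk : 0 < k) :
  size (wk k) = 4 * k + 2 /\
  num_abelian_squares (wk k) = k + (k./2 + 1) ^ 2 + (k + 1) * uphalf k /\
  k + (k./2 + 1) ^ 2 + (k + 1) * uphalf k
    <= \max_(w : (4 * k + 2).-tuple bool) num_abelian_squares w.
Proof.
split; first exact: size_wk.
split; first exact: num_abelian_squares_wk.
rewrite -num_abelian_squares_wk.
have size_wkP : size (wk k) == 4 * k + 2 by rewrite size_wk.
exact: (@leq_bigmax _ (fun w : (4 * k + 2).-tuple bool => num_abelian_squares w) (Tuple size_wkP)).
Qed.
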